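(* Let $G$ be a directed graph in which every vertex is reachable from a vertex $s$, let $t$ be a vertex of $G$, and let $k\ge 1$ be an integer. Assume that for no $\ell\in\{k,k+1,\dots,2k-1\}$ does $G$ contain an $(s,t)$-path of length exactly $dist_G(s,t)+\ell$, and assume that $G$ contains an $(s,t)$-path of length at least $dist_G(s,t)+k$. Let $P$ be such a path of minimum length. For $i\ge 0$ let $L_i$ be the set of vertices at distance exactly $i$ from $s$ in $G$. Let $p$ be the smallest integer $i\ge 1$ such that $L_i$ contains more than one vertex of $P$, and let $u$ and $v$ be, respectively, the first and second vertices of $P$ (in the order along $P$) lying in $L_p$. Then the subpath $P_{u,v}$ of $P$ from $u$ to $v$ has length larger than $k$.
   Context: Paths are simple directed paths; the length of a path is its number of edges. $dist_G(a,b)$ denotes the length of a shortest directed $(a,b)$-path in $G$. For a path $P$ and vertices $a,b$ on it (with $a$ before $b$), $P_{a,b}$ denotes the subpath of $P$ from $a$ to $b$. *)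

From mathcomp Require Import all_boot.
Set Implicit Arguments. Unset Strict Implicit. Unset Printing Implicit Defensive.

(* A (simple directed) (a,b)-path is given by its vertex list a :: q;
   its length (number of edges) is size q. *)
Definition spath (T : finType) (e : rel T) (a b : T) (q : seq T) : bool :=
  [&& path e a q, last a q == b & uniq (a :: q)].

Definition has_path_len (T : finType) (e : rel T) (a b : T) (n : nat) : bool :=
  [exists q : n.-tuple T, spath e a b q].

(* dist_G(a,b): the least length of an (a,b)-path (simple paths have fewer
   than #|T| edges, so searching 0 .. #|T|-1 suffices; the value #|T| is
   returned when b is unreachable from a, a case never used below). *)
Definition dist (T : finType) (e : rel T) (a b : T) : nat :=
  find (has_path_len e a b) (iota 0 #|T|).

From mathcomp Require Import all_boot zify.
Set Implicit Arguments. Unset Strict Implicit. Unset Printing Implicit Defensive.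

(* Levels along P increase by at most one per edge and start at 0.  Since the
   levels 1, ..., p-1 contain at most one vertex of P each, the vertices of P
   before u occupy distinct levels below p; hence u sits at position p on P and
   the prefix of P up to u is a shortest path.  Replacing the part of P before v
   by a shortest (s,v)-path R yields again a simple (s,t)-path: R visits only
   levels <= p, reaching level p only at v, while the vertices of P after v are
   neither v nor on a level below p.  This path is shorter than P by
   |P_{u,v}| = i2 - i1; if that were at most k, minimality of P would force it
   below dist + k, putting the excess length of P in the forbidden window
   [k, 2k-1]. *)

Section PathSplit.
Variable T : Type.

Lemma last_take_nth (x : T) q j : j <= size q -> last x (take j q) = nth x (x :: q) j.
Proof.
elim: q x j => [|y q IHq] x [|j] //= Hj.
by rewrite IHq //; apply: set_nth_default.
Qed.

Lemma path_drop_nth (e : rel T) x q j :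
  path e x q -> path e (nth x (x :: q) j) (drop j q).
Proof.
have [Hj | /ltnW/drop_oversize -> //] := leqP j (size q).
by rewrite -{1}(cat_take_drop j q) cat_path last_take_nth // => /andP[].
Qed.

Lemma last_drop_nth (x : T) q j :
  j <= size q -> last (nth x (x :: q) j) (drop j q) = last x q.
Proof. by move=> Hj; rewrite -{3}(cat_take_drop j q) last_cat last_take_nth. Qed.
End PathSplit.

Lemma mem_drop_nth (T : eqType) (x : T) q j y : y \in drop j q ->
  exists2 m, j < m <= size q & y = nth x (x :: q) m.
Proof.
move=> Hy; exists (j + index y (drop j q)).+1; last by rewrite /= -nth_drop nth_index.
by have := index_mem y (drop j q); rewrite Hy size_drop; lia.
Qed.

Section ShortestPaths.
Variables (T : finType) (e : rel T).

Lemma spath_size_lt a b q : spath e a b q -> size q < #|T|.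
Proof. by case/and3P=> _ _ /card_uniqP Hq; have := max_card (mem (a :: q)); rewrite Hq. Qed.

Lemma has_path_lenP a b n :
  reflect (exists2 q, spath e a b q & size q = n) (has_path_len e a b n).
Proof.
apply: (iffP existsP) => [[q Hq] | [q Hq <-]]; last by exists (in_tuple q).
by exists (tval q); rewrite ?size_tuple.
Qed.

Lemma has_path_len_lt a b n : has_path_len e a b n -> n < #|T|.
Proof. by case/has_path_lenP=> q /spath_size_lt + <-. Qed.

Lemma dist_le_path_len a b n : has_path_len e a b n -> dist e a b <= n.
Proof.
move=> Hn; rewrite leqNgt; apply/negP=> /(before_find 0).
by rewrite nth_iota ?add0n ?Hn // (has_path_len_lt Hn).
Qed.

Lemma has_path_len_dist a b n :
  has_path_len e a b n -> has_path_len e a b (dist e a b).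
Proof.
move=> Hn; have Hhas : has (has_path_len e a b) (iota 0 #|T|).
  by apply/hasP; exists n; rewrite ?mem_iota ?(has_path_len_lt Hn).
have := nth_find 0 Hhas; rewrite nth_iota ?add0n //.
by rewrite -[X in _ < X](size_iota 0 #|T|) -has_find.
Qed.

Lemma dist_path_le a w : path e a w -> dist e a (last a w) <= size w.
Proof.
case/shortenP=> q Pq Uq Sq; have /andP[_ Uq'] := Uq.
apply: leq_trans (uniq_leq_size Uq' Sq).
by apply/dist_le_path_len/has_path_lenP; exists q; rewrite // /spath Pq Uq eqxx.
Qed.

Lemma shortest_spath a b :
  connect e a b -> exists2 q, spath e a b q & size q = dist e a b.
Proof.
case/connectP=> w /shortenP[q Pq Uq _] ->.
have Hq : has_path_len e a (last a q) (size q).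
  by apply/has_path_lenP; exists q; rewrite // /spath Pq Uq eqxx.
exact/has_path_lenP/(has_path_len_dist Hq).
Qed.

Lemma dist_eq0 a b : connect e a b -> dist e a b = 0 -> b = a.
Proof. by case/shortest_spath=> q /and3P[_ /eqP <- _] <- /size0nil ->. Qed.

Lemma dist_edge a x y : connect e a x -> e x y -> dist e a y <= (dist e a x).+1.
Proof.
case/shortest_spath=> q /and3P[Pq /eqP Lq _] Sq Exy.
have := @dist_path_le a (rcons q y).
by rewrite last_rcons size_rcons Sq rcons_path Pq Lq Exy; apply.
Qed.

Lemma dist_nth_le a q j : path e a q -> j <= size q -> dist e a (nth a (a :: q) j) <= j.
Proof.
move=> Pq Hj; rewrite -last_take_nth //.
by apply: leq_trans (dist_path_le (take_path j Pq)) _; rewrite size_take_min geq_minl.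
Qed.

Lemma dist_mem_path a q y : path e a q -> y \in a :: q ->
  dist e a y <= size q /\ (dist e a y = size q -> y = last a q).
Proof.
move=> Pq qy; have Hy : index y (a :: q) <= size q by rewrite -ltnS index_mem.
have Dy := dist_nth_le Pq Hy; rewrite nth_index // in Dy.
split=> [|Eq]; first exact: leq_trans Dy Hy.
have Hix : index y (a :: q) = size q by apply/eqP; rewrite eqn_leq Hy -{1}Eq Dy.
by rewrite (last_nth a) -Hix nth_index.
Qed.
End ShortestPaths.

Section FirstRepeatedLevel.
Variables (T : finType) (e : rel T) (s : T) (P : seq T) (p i1 : nat).
Hypotheses (reach : forall x, connect e s x) (Ps : path e s P) (Us : uniq (s :: P)).
Local Notation level j := (dist e s (nth s (s :: P) j)).

Lemma level_succ j : j < size P -> level j.+1 <= (level j).+1.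
Proof. by move=> Hj; apply: dist_edge (reach _) _; apply: (pathP s Ps). Qed.

Hypothesis lower_levels_le1 :
  forall i, 1 <= i < p -> #|[set x in s :: P | dist e s x == i]| <= 1.

Lemma level_inj j j' : j < size (s :: P) -> j' < size (s :: P) ->
  level j = level j' -> level j < p -> j = j'.
Proof.
move=> Hj Hj' E Hlt; apply/eqP; rewrite -(nth_uniq s Hj Hj' Us); apply/eqP.
case Hl: (level j) => [|l] in E Hlt *.
  by rewrite (dist_eq0 (reach _) Hl) (dist_eq0 (reach _) (esym E)).
apply: (card_le1_eqP (lower_levels_le1 (i := l.+1) Hlt));
  by rewrite inE mem_nth //= ?Hl -?E.
Qed.

Hypotheses (i1_le : i1 <= size P) (level_i1 : level i1 = p)
  (level_before_i1 : forall j, j < i1 -> level j != p).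

Lemma level_lt_before j : j < i1 -> level j < p.
Proof.
elim: j => [|j IHj] Hj; rewrite ltn_neqAle level_before_i1 // andTb.
  exact: leq_trans (dist_nth_le Ps (leq0n _)) (leq0n p).
exact: leq_trans (level_succ (leq_trans (ltnW Hj) i1_le)) (IHj (ltnW Hj)).
Qed.

Lemma first_level_index : i1 = p.
Proof.
apply/eqP; rewrite eqn_leq -{2}level_i1 dist_nth_le // andbT.
(* Pigeonhole: the vertices at positions below i1 lie on distinct levels below p. *)
have Ulevel : uniq [seq level j | j <- iota 0 i1].
  rewrite map_inj_in_uniq ?iota_uniq // => j j'; rewrite !mem_iota /= => Hj Hj' E.
  by apply: level_inj E (level_lt_before Hj); rewrite /= ltnS (leq_trans _ i1_le) // ltnW.
have := @uniq_leq_size _ _ (iota 0 p) Ulevel; rewrite size_map !size_iota; apply.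
by move=> x /mapP[j]; rewrite !mem_iota /= => Hj ->; rewrite level_lt_before.
Qed.

Lemma level_prefix j : j <= p -> level j = j.
Proof.
rewrite -first_level_index => Hj.
apply/eqP; rewrite eqn_leq (dist_nth_le Ps (leq_trans Hj i1_le)) /=.
have climb m : j + m <= i1 -> level (j + m) <= level j + m.
  elim: m => [|m IHm] Hm; first by rewrite !addn0.
  rewrite !addnS; apply: leq_trans (level_succ _) _; first lia.
  by rewrite ltnS IHm //; lia.
have := climb (i1 - j); rewrite subnKC // level_i1 -first_level_index => /(_ (leqnn _)).
lia.
Qed.

Lemma low_level_index m : m < size (s :: P) -> level m < p -> level m = m.
Proof.
move=> Hm Hlt; have Hl : level m <= p by exact: ltnW.
apply: level_inj; rewrite ?(level_prefix Hl) //.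
by rewrite ltnS (leq_trans Hl) // -first_level_index.
Qed.

Variables (t : T) (i2 : nat).
Hypotheses (Ls : last s P = t) (i12 : i1 < i2) (i2_le : i2 <= size P)
  (level_i2 : level i2 = p).

Lemma shortcut_spath : exists2 Q, spath e s t Q & size Q = p + (size P - i2).
Proof.
have [R /and3P[PR /eqP LR UR] SR] := shortest_spath (reach (nth s (s :: P) i2)).
rewrite level_i2 in SR.
exists (R ++ drop i2 P); last by rewrite size_cat SR size_drop.
apply/and3P; split.
- by rewrite cat_path PR LR path_drop_nth.
- by rewrite last_cat LR last_drop_nth // Ls.
rewrite -cat_cons cat_uniq UR drop_uniq ?andbT; last by case/andP: Us.
apply/hasPn=> _ /(mem_drop_nth s)[m /andP[Hm1 Hm2] ->]; apply/negP.
case/(dist_mem_path PR); rewrite SR leq_eqVlt => /orP[/eqP Em | Hlt] Hv.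
  by move/eqP: (Hv Em); rewrite LR nth_uniq // => /eqP; lia.
have Em := low_level_index Hm2 Hlt.
by rewrite Em -first_level_index in Hlt; lia.
Qed.
End FirstRepeatedLevel.

Theorem lemma2 (T : finType) (e : rel T) (s t : T) (k : nat) (P : seq T)
  (p i1 i2 : nat) :
  (forall x : T, connect e s x) ->
  1 <= k ->
  (forall (l : nat) (q : seq T), k <= l <= 2 * k - 1 -> spath e s t q ->
      size q != dist e s t + l) ->
  (* P is an (s,t)-path (vertex list s :: P) of length >= dist + k, of minimum length *)
  spath e s t P -> dist e s t + k <= size P ->
  (forall Q : seq T, spath e s t Q -> dist e s t + k <= size Q ->
      size P <= size Q) ->
  (* p is the least i >= 1 such that L_i contains more than one vertex of P *)
  1 <= p ->
  1 < #|[set x in s :: P | dist e s x == p]| ->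
  (forall i, 1 <= i < p -> #|[set x in s :: P | dist e s x == i]| <= 1) ->
  (* u = (s :: P)_i1 and v = (s :: P)_i2 are the first and second vertices of P in L_p *)
  i1 < i2 < size (s :: P) ->
  dist e s (nth s (s :: P) i1) = p ->
  dist e s (nth s (s :: P) i2) = p ->
  (forall j, j < i2 -> j != i1 -> dist e s (nth s (s :: P) j) != p) ->
  (* the subpath P_{u,v} has length i2 - i1 *)
  k < i2 - i1.
Proof.
move=> reach _ gap HP long minP _ _ lower /andP[i12 i2_lt] level_i1 level_i2 first.
have /and3P[Ps /eqP Ls Us] := HP.
have i2_le : i2 <= size P := i2_lt.
have i1_le : i1 <= size P by exact: ltnW (leq_trans i12 i2_le).
have before j : j < i1 -> dist e s (nth s (s :: P) j) != p.
  by move=> Hj; apply: first; [exact: ltn_trans i12 | rewrite ltn_eqF].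
have i1_p := first_level_index reach Ps Us lower i1_le level_i1 before.
have [Q HQ SQ] := shortcut_spath reach Ps Us lower i1_le level_i1 before Ls i12 i2_le level_i2.
rewrite ltnNge; apply/negP=> short.
have [Qlong | Qshort] := leqP (dist e s t + k) (size Q).
  by have := minP Q HQ Qlong; lia.
have window : k <= size P - dist e s t <= 2 * k - 1 by lia.
by have := gap _ P window HP; rewrite subnKC ?eqxx //; lia.
Qed.
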